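(* Let $\{GM_n\}$ be the Gaussian Tetranacci numbers and $\{GR_n\}$ the Gaussian Tetranacci-Lucas numbers. Then for every integer $n\ge3$: $$(4-i)GM_{2n}-(9-4i)GM_{2n-2}-(6-7i)GM_{2n-4}+(1+i)GM_{2n-6}=(1+i)GR_{2n-2}+(1-i)GR_{2n-4}-iGR_{2n-6},$$ $$(1+4i)GM_{2n}+(4-9i)GM_{2n-2}+(2-6i)GM_{2n-4}+(1+i)GM_{2n-6}=(1+i)GR_{2n-1}+(1-i)GR_{2n-3}-iGR_{2n-5},$$ $$(4-i)GM_{2n+1}-(9-4i)GM_{2n-1}-(6-7i)GM_{2n-3}+(1+i)GM_{2n-5}=GR_{2n}-(1-i)GR_{2n-2}-(1-i)GR_{2n-4},$$ $$(1+4i)GM_{2n+1}+(4-9i)GM_{2n-1}+(2-6i)GM_{2n-3}+(1+i)GM_{2n-5}=GR_{2n+1}-(1-i)GR_{2n-1}-(1-i)GR_{2n-3}.$$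
   Context: The Gaussian Tetranacci numbers: $GM_0=0$, $GM_1=1$, $GM_2=1+i$, $GM_3=2+i$, $GM_n=GM_{n-1}+GM_{n-2}+GM_{n-3}+GM_{n-4}$ for $n\ge4$. The Gaussian Tetranacci-Lucas numbers: $GR_0=4-i$, $GR_1=1+4i$, $GR_2=3+i$, $GR_3=7+3i$, $GR_n=GR_{n-1}+GR_{n-2}+GR_{n-3}+GR_{n-4}$ for $n\ge4$. *)

From HB Require Import structures.
From mathcomp Require Import all_boot all_order all_algebra all_field.
Set Implicit Arguments. Unset Strict Implicit. Unset Printing Implicit Defensive.
Import Order.TTheory GRing.Theory Num.Theory.
Local Open Scope ring_scope.

Fixpoint GM (n : nat) : algC :=
  match n with
  | 0 => 0
  | 1 => 1
  | 2 => 1 + 'i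
  | 3 => 2 + 'i
  | ((((m.+1 as m1).+1 as m2).+1 as m3).+1) => GM m3 + GM m2 + GM m1 + GM m
  end.

Fixpoint GR (n : nat) : algC :=
  match n with
  | 0 => 4 - 'i
  | 1 => 1 + 4 * 'i
  | 2 => 3 + 'i
  | 3 => 7 + 3 * 'i
  | ((((m.+1 as m1).+1 as m2).+1 as m3).+1) => GR m3 + GR m2 + GR m1 + GR m
  end.

(* Each side of each identity is a fixed linear combination of shifts of GM or
   of GR, so it satisfies the tetranacci recurrence itself. Two solutions of
   that recurrence agreeing at four consecutive indices coincide, hence every
   identity holds at all indices and reduces to a direct check at the indices 0, 1, 2, 3. *)

From HB Require Import structures.
From mathcomp Require Import all_boot all_order all_algebra all_field.
From mathcomp Require Import ring zify.
Import Order.TTheory GRing.Theory Num.Theory.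
Local Open Scope ring_scope.

Definition tetranacci {V : nmodType} (f : nat -> V) :=
  forall k, f k.+4 = f k.+3 + f k.+2 + f k.+1 + f k.

Lemma tetranacci_eq {V : nmodType} (f g : nat -> V) :
  tetranacci f -> tetranacci g -> (forall k, (k < 4)%N -> f k = g k) -> f =1 g.
Proof.
move=> Tf Tg fg k; elim/ltn_ind: k => -[|[|[|[|k]]]] IH; try exact: fg.
by rewrite Tf Tg !IH //; lia.
Qed.

Lemma GM_tetranacci : tetranacci GM.
Proof. by []. Qed.

Lemma GR_tetranacci : tetranacci GR.
Proof. by []. Qed.

(* [cbv beta] rather than [/=]: simpl would unfold GM and GR at symbolic indices. *)
Ltac tetranacci_identity :=
  apply: tetranacci_eq => [k|k|[|[|[|[|//]]]] _]; cbv beta;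
  [ rewrite !GM_tetranacci; ring
  | rewrite !GR_tetranacci; ring
  | rewrite /=; ring: (@sqrCi algC) .. ].

Lemma GM_GR_identity1 k :
  (4 - 'i) * GM (6 + k) - (9 - 4 * 'i) * GM (4 + k) - (6 - 7 * 'i) * GM (2 + k)
    + (1 + 'i) * GM k
  = (1 + 'i) * GR (4 + k) + (1 - 'i) * GR (2 + k) - 'i * GR k.
Proof. by move: k; tetranacci_identity. Qed.

Lemma GM_GR_identity2 k :
  (1 + 4 * 'i) * GM (6 + k) + (4 - 9 * 'i) * GM (4 + k) + (2 - 6 * 'i) * GM (2 + k)
    + (1 + 'i) * GM k
  = (1 + 'i) * GR (5 + k) + (1 - 'i) * GR (3 + k) - 'i * GR (1 + k).
Proof. by move: k; tetranacci_identity. Qed.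

Lemma GM_GR_identity3 k :
  (4 - 'i) * GM (6 + k) - (9 - 4 * 'i) * GM (4 + k) - (6 - 7 * 'i) * GM (2 + k)
    + (1 + 'i) * GM k
  = GR (5 + k) - (1 - 'i) * GR (3 + k) - (1 - 'i) * GR (1 + k).
Proof. by move: k; tetranacci_identity. Qed.

Lemma GM_GR_identity4 k :
  (1 + 4 * 'i) * GM (6 + k) + (4 - 9 * 'i) * GM (4 + k) + (2 - 6 * 'i) * GM (2 + k)
    + (1 + 'i) * GM k
  = GR (6 + k) - (1 - 'i) * GR (4 + k) - (1 - 'i) * GR (2 + k).
Proof. by move: k; tetranacci_identity. Qed.

Theorem mainTheorem19 (n : nat) (hn : (3 <= n)%N) :
  [/\ (4 - 'i) * GM (2 * n) - (9 - 4 * 'i) * GM (2 * n - 2) - (6 - 7 * 'i) * GM (2 * n - 4)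
        + (1 + 'i) * GM (2 * n - 6)
      = (1 + 'i) * GR (2 * n - 2) + (1 - 'i) * GR (2 * n - 4) - 'i * GR (2 * n - 6),
      (1 + 4 * 'i) * GM (2 * n) + (4 - 9 * 'i) * GM (2 * n - 2) + (2 - 6 * 'i) * GM (2 * n - 4)
        + (1 + 'i) * GM (2 * n - 6)
      = (1 + 'i) * GR (2 * n - 1) + (1 - 'i) * GR (2 * n - 3) - 'i * GR (2 * n - 5),
      (4 - 'i) * GM (2 * n + 1) - (9 - 4 * 'i) * GM (2 * n - 1) - (6 - 7 * 'i) * GM (2 * n - 3)
        + (1 + 'i) * GM (2 * n - 5)
      = GR (2 * n) - (1 - 'i) * GR (2 * n - 2) - (1 - 'i) * GR (2 * n - 4) &
      (1 + 4 * 'i) * GM (2 * n + 1) + (4 - 9 * 'i) * GM (2 * n - 1) + (2 - 6 * 'i) * GM (2 * n - 3)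
        + (1 + 'i) * GM (2 * n - 5)
      = GR (2 * n + 1) - (1 - 'i) * GR (2 * n - 1) - (1 - 'i) * GR (2 * n - 3)].
Proof.
have [k def2n] : exists k, (2 * n = 6 + k)%N by exists (2 * n - 6)%N; lia.
(* After the rewrites every index reads 6 + k - j or (6 + k).+1, which computes
   to a literal plus k, so the identities at k and k.+1 apply up to conversion. *)
rewrite addn1 def2n addKn; split.
- exact: GM_GR_identity1.
- exact: GM_GR_identity2.
- exact: GM_GR_identity3 k.+1.
- exact: GM_GR_identity4 k.+1.
Qed.
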